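(* For all positive integers $m,n$, the diameter of the cyclic simplicial rook graph satisfies $\operatorname{diam}(\mathcal{CSR}(m,n))=m-\left\lfloor \frac{m-1}{n}\right\rfloor-1$.
   Context: For positive integers $m,n$, the cyclic simplicial rook graph $\mathcal{CSR}(m,n)$ is the graph whose vertices are the vectors $(a_1,\dots,a_m)\in\mathbb{Z}_n^m$ with $a_1+\cdots+a_m\equiv 0 \pmod n$, two vertices being adjacent if and only if their vectors differ in exactly two coordinates. *)

From mathcomp Require Import all_boot.
Set Implicit Arguments. Unset Strict Implicit. Unset Printing Implicit Defensive.

Definition nbhd (T : finType) (e : rel T) (A : {set T}) : {set T} :=
  A :|: [set y | [exists x in A, e x y]].

Definition ball (T : finType) (e : rel T) (k : nat) (x : T) : {set T} :=
  iter k (nbhd e) [set x].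

(* graph distance: least k with y in ball k x (any reachable vertex is at
   distance < #|T|; unreachable pairs get the value #|T|) *)
Definition gdist (T : finType) (e : rel T) (x y : T) : nat :=
  find (fun k => y \in ball e k x) (iota 0 #|T|).

Definition diameter (T : finType) (e : rel T) : nat :=
  \max_(x : T) \max_(y : T) gdist e x y.

Definition csr_vertex (m n : nat) : predArgType :=
  {f : {ffun 'I_m -> 'I_n} | (\sum_(i < m) (f i : nat)) %% n == 0}.

Definition csr_adj (m n : nat) : rel (csr_vertex m n) :=
  fun u v => #|[set i : 'I_m | sval u i != sval v i]| == 2.
Arguments csr_adj m n : clear implicits.

(* Lower bound: along a walk from 0, the vertex reached after k steps admits
   a partition of the coordinates into at least m - k blocks, each summing to
   0 mod n, because a step changes only two coordinates and so merges at most
   two blocks.  For the vertex (1, ..., 1, 1 - m) every block avoiding the last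
   coordinate consists of 1's, so its size is a multiple of n; hence there are
   at most 1 + (m - 1)/n blocks.

   Upper bound: if y - x is supported on s coordinates, choose a minimal
   nonempty set B of coordinates on which y - x sums to 0.  Pigeonhole on
   prefix sums gives |B| <= n, and minimality lets us correct the coordinates
   of B one per move, carrying the error to another coordinate of B, in
   |B| - 1 moves.  Induction on s bounds the distance by s - ceil (s / n). *)

From mathcomp Require Import all_boot all_algebra.
From mathcomp Require Import zify ring.
Set Implicit Arguments. Unset Strict Implicit. Unset Printing Implicit Defensive.
Import GRing.Theory.

Section GraphBalls.
Variables (T : finType) (e : rel T).

Lemma ballS k x : ball e k.+1 x = nbhd e (ball e k x).
Proof. by rewrite /ball iterS. Qed.

Lemma in_ball0 x y : (y \in ball e 0 x) = (y == x).
Proof. exact: in_set1. Qed.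

Lemma mem_ball k x : x \in ball e k x.
Proof. by elim: k => [|k IH]; rewrite ?in_ball0 // ballS !inE IH. Qed.

Lemma subset_ballS k x : ball e k x \subset ball e k.+1 x.
Proof. by rewrite ballS subsetUl. Qed.

Lemma subset_ball k l x : k <= l -> ball e k x \subset ball e l x.
Proof.
move=> /subnK <-; elim: (l - k) => [|j IH] //=.
exact: subset_trans IH (subset_ballS _ _).
Qed.

Lemma ball_edge k x y z : y \in ball e k x -> e y z -> z \in ball e k.+1 x.
Proof.
move=> y_in yz; rewrite ballS !inE; apply/orP; right.
by apply/existsP; exists y; rewrite y_in.
Qed.

Lemma ball_trans a b x y z :
  y \in ball e a x -> z \in ball e b y -> z \in ball e (a + b) x.
Proof.
move=> y_in; elim: b z => [|b IH] z; first by rewrite in_ball0 addn0 => /eqP ->.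
rewrite ballS !inE addnS => /orP[/IH | /existsP[w /andP[/IH w_in wz]]].
  exact: (subsetP (subset_ballS _ _)).
exact: ball_edge w_in wz.
Qed.

Lemma gdist_le k x y : y \in ball e k x -> gdist e x y <= k.
Proof.
move=> y_in; rewrite /gdist; case: (ltnP k #|T|) => [lt_kT|le_Tk].
  rewrite leqNgt; apply/negP => /(before_find 0).
  by rewrite nth_iota // y_in.
by apply: leq_trans (find_size _ _) _; rewrite size_iota.
Qed.

Section FarPoint.
Variables (D : nat) (x y : T).
Hypotheses (y_in : y \in ball e D x) (y_far : forall k, y \in ball e k x -> D <= k).

Lemma ball_proper k : k < D -> ball e k x \proper ball e k.+1 x.
Proof.
move=> lt_kD; rewrite properEneq subset_ballS andbT; apply/negP => /eqP stable.
have ball_const j : ball e (j + k) x = ball e k x.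
  by elim: j => [|j IH] //; rewrite addSn ballS IH -ballS.
by move: y_in; rewrite -(subnK (ltnW lt_kD)) ball_const => /y_far; lia.
Qed.

Lemma card_ball_gt k : k <= D -> k < #|ball e k x|.
Proof.
elim: k => [|k IH] le_kD; first by rewrite /ball cards1.
exact: leq_ltn_trans (IH (ltnW le_kD)) (proper_card (ball_proper le_kD)).
Qed.

Lemma gdist_ge : D <= gdist e x y.
Proof.
rewrite /gdist; set P := fun k => y \in ball e k x.
case: (ltnP (find P (iota 0 #|T|)) #|T|) => [lt_fT|]; last first.
  apply: leq_trans; exact: ltnW (leq_trans (card_ball_gt (leqnn D)) (max_card _)).
have := @nth_find _ 0 P (iota 0 #|T|); rewrite nth_iota // add0n => y_found.
by apply/y_far/y_found; rewrite has_find size_iota.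
Qed.

End FarPoint.
End GraphBalls.

Lemma zero_sum_subset (G : finZmodType) (I : finType) (d : I -> G) (B : {set I}) :
  #|G| <= #|B| ->
  exists U : {set I}, [/\ U \subset B, U != set0, (\sum_(i in U) d i = 0)%R & #|U| <= #|G|].
Proof.
move=> le_GB; set s := enum B.
pose P k := (\sum_(t <- take k s) d t)%R.
have [a [b [lt_ab le_bG Pab]]] : exists a b, [/\ a < b, b <= #|G| & P a = P b].
  have /injectivePn[a [b neq_ab Pab]] : ~~ injectiveb (fun k : 'I_#|G|.+1 => P k).
    by apply/injectiveP => /leq_card; rewrite card_ord ltnn.
  have [lt_ab|lt_ba|/val_inj eq_ab] := ltngtP a b; last by rewrite eq_ab eqxx in neq_ab.
    by exists a, b; split => //; exact: ltn_ord b.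
  by exists b, a; split => //; exact: ltn_ord a.
set r := drop a (take b s).
have size_r : size r = b - a.
  by rewrite size_drop size_takel // -cardE (leq_trans le_bG).
have uniq_r : uniq r by rewrite drop_uniq // take_uniq // enum_uniq.
exists [set t in r]; split.
- by apply/subsetP => t; rewrite inE => /mem_drop /mem_take; rewrite mem_enum.
- case: r size_r {uniq_r} => [|t r'] /= size_r; first by lia.
  by apply/set0Pn; exists t; rewrite inE mem_head.
- rewrite (eq_bigl (mem r)) => [|t]; last by rewrite inE.
  rewrite -big_uniq //; apply: (addrI (P a)); rewrite addr0 {2}Pab /P.
  rewrite -[in RHS](cat_take_drop a (take b s)) big_cat take_takel //.
  exact: ltnW.
- by rewrite cardsE (card_uniqP uniq_r) size_r; lia.
Qed.

Lemma card_imset_mul (I J : finType) (f : I -> J) (A : {set I}) k :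
  (forall t, t \in A -> k <= #|[set u in A | f u == f t]|) -> #|f @: A| * k <= #|A|.
Proof.
move=> big_fibres; rewrite -sum_nat_const -sum1_card (partition_big_imset f).
apply: leq_sum => _ /imsetP[t t_in ->].
by rewrite sum1dep_card; apply: big_fibres.
Qed.

(* For [s > 0] this is [s - ceil (s / n)]. *)
Definition csr_bound (n s : nat) : nat := s - (s - 1) %/ n - 1.

Lemma csr_bound_split n b s : 2 <= b <= n -> b <= s ->
  b.-1 + csr_bound n (s - b) <= csr_bound n s.
Proof.
move=> /andP[b_ge2 b_le_n]; rewrite leq_eqVlt => /predU1P[<-|lt_bs].
  rewrite /csr_bound subnn div0n (divn_small (_ : b - 1 < n)); lia.
rewrite /csr_bound.
have : (s - 1) %/ n <= (s - b - 1) %/ n + 1.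
  rewrite -divnDMl ?mul1n; last lia.
  apply: leq_div2r; lia.
have := leq_div (s - b - 1) n.
lia.
Qed.

Lemma csr_bound_mono n s t : 0 < n -> s <= t -> csr_bound n s <= csr_bound n t.
Proof.
move=> n_gt0 le_st; rewrite /csr_bound.
have : (t - 1) %/ n <= (s - 1) %/ n + (t - s).
  rewrite -divnDMl //; apply: leq_div2r; nia.
have := leq_div (s - 1) n.
lia.
Qed.

Lemma sum_natmul_eq (I : finType) (M : nmodType) (P : pred I) i (a : M) :
  (\sum_(k | P k) a *+ (k == i) = a *+ P i)%R.
Proof.
have [Pi|nPi] := boolP (P i).
  by rewrite (bigD1 i) //= eqxx big1 ?addr0 // => k /andP[_ /negPf->].
by apply: big1 => k Pk; case: eqVneq => // ki; rewrite -ki Pk in nPi.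
Qed.

Section CyclicSimplicialRook.
Variables (m p : nat).
(* ['I_n] is a ring only for [n] of the form [p.+2]; [n = 1] is treated apart. *)
Local Notation n := p.+2.
Local Notation V := (csr_vertex m n).
Local Open Scope ring_scope.

Lemma val_sum_ord (f : 'I_m -> 'I_n) :
  nat_of_ord (\sum_i f i) = ((\sum_i (f i : nat)) %% n)%N.
Proof.
apply: (big_rec2 (fun (a : nat) (b : 'I_n) => nat_of_ord b = (a %% n)%N)) => // i a b _ Eb.
by rewrite -modnDmr -Eb.
Qed.

Lemma sum_ord_eq0 (f : 'I_m -> 'I_n) :
  ((\sum_i (f i : nat)) %% n == 0)%N = (\sum_i f i == 0).
Proof. by rewrite -val_sum_ord. Qed.

Lemma csr_sum_eq0 (x : V) : \sum_i sval x i = 0.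
Proof. by apply/eqP; rewrite -sum_ord_eq0; case: x. Qed.

Definition csr_mk (f : {ffun 'I_m -> 'I_n}) (f0 : \sum_i f i = 0) : V :=
  exist _ f (etrans (sum_ord_eq0 f) (introT eqP f0)).

Lemma csr_mkE f f0 : sval (@csr_mk f f0) = f.
Proof. by []. Qed.

Lemma csr_adj_agree_off2 (z w : V) : csr_adj m n z w ->
  exists i j, forall t, t != i -> t != j -> sval z t = sval w t.
Proof.
move=> /cards2P[i [j [_ diff_ij]]]; exists i, j => t ti tj.
apply/eqP; apply: contraNT tj => zwt.
have : t \in [set k | sval z k != sval w k] by rewrite inE.
by rewrite diff_ij in_set2 (negPf ti).
Qed.

Lemma eq_sum_agree_off2 (z w : V) i j (A : pred 'I_m) :
  (forall t, t != i -> t != j -> sval z t = sval w t) -> A i = A j ->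
  \sum_(t | A t) sval z t = \sum_(t | A t) sval w t.
Proof.
move=> zw Aij; have [Ai|nAi] := boolP (A i); last first.
  by apply: eq_bigr => t At; apply: zw; apply: contraTneq At => ->; rewrite -?Aij.
have split_sum (x : V) :
    \sum_(t | A t) sval x t = - \sum_(t | ~~ A t) sval x t.
  by apply/eqP; rewrite -addr_eq0; apply/eqP; rewrite -[RHS](csr_sum_eq0 x) [RHS](bigID A).
rewrite !split_sum; congr (- _); apply: eq_bigr => t nAt.
by apply: zw; apply: contraNneq nAt => ->; rewrite -?Aij.
Qed.

(* The fibres of [lab] are the blocks of a partition of the coordinates. *)
Definition zero_sum_labelling (f : 'I_m -> 'I_n) (lab : 'I_m -> 'I_m) :=
  forall c, \sum_(t | lab t == c) f t = 0.

Definition merge_labels (lab : 'I_m -> 'I_m) i j t :=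
  if lab t == lab j then lab i else lab t.

Lemma zero_sum_labelling_merge (w z : V) lab i j :
  (forall t, t != i -> t != j -> sval w t = sval z t) ->
  zero_sum_labelling (sval w) lab ->
  zero_sum_labelling (sval z) (merge_labels lab i j).
Proof.
move=> wz w_lab c.
rewrite -(eq_sum_agree_off2 (A := fun t => merge_labels lab i j t == c) wz); last first.
  by rewrite /merge_labels eqxx; case: ifP.
rewrite (bigID (fun t => lab t == lab j)) /=.
rewrite (eq_bigl (fun t => (lab i == c) && (lab t == lab j))) => [|t]; last first.
  by rewrite /merge_labels; case: ifP; rewrite ?andbT ?andbF.
rewrite [X in _ + X](eq_bigl (fun t => (c != lab j) && (lab t == c))) => [|t]; last first.
  rewrite /merge_labels; case: (eqVneq (lab t) (lab j)) => [->|ltj] /=.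
    by rewrite andbF; case: eqVneq => // ->; rewrite eqxx.
  by case: (eqVneq c (lab j)) => [cj|] /=; rewrite ?andbT ?andbF // cj (negPf ltj).
rewrite -[RHS]addr0; congr (_ + _).
  by have [_|_] /= := eqVneq (lab i) c; rewrite ?w_lab // big_pred0.
by have [_|_] /= := eqVneq c (lab j); rewrite ?w_lab // big_pred0.
Qed.

Lemma card_merge_labels lab i j :
  (#|lab @: [set: 'I_m]| <= #|merge_labels lab i j @: [set: 'I_m]|.+1)%N.
Proof.
rewrite -add1n -(cards1 (lab j)); apply: leq_trans (leq_card_setU _ _).
apply/subset_leq_card/subsetP => _ /imsetP[t _ ->]; rewrite !inE.
case: (eqVneq (lab t) (lab j)) => //= ltj; apply/imsetP; exists t; rewrite ?inE //.
by rewrite /merge_labels (negPf ltj).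
Qed.

Lemma sum_ffun0 : \sum_i ([ffun=> 0] : {ffun 'I_m -> 'I_n}) i = 0.
Proof. by apply: big1 => i _; rewrite ffunE. Qed.

Definition csr0 : V := csr_mk sum_ffun0.

Lemma ball_csr0_labelling k z : z \in ball (csr_adj m n) k csr0 ->
  exists lab, zero_sum_labelling (sval z) lab /\ (m <= k + #|lab @: [set: 'I_m]|)%N.
Proof.
elim: k z => [|k IH] z.
  rewrite in_ball0 => /eqP ->; exists id; split.
    by move=> c; apply: big1 => t _; rewrite ffunE.
  by rewrite card_imset // cardsT card_ord.
rewrite ballS !inE => /orP[/IH[lab [z_lab le_m]] | /existsP[w /andP[w_near wz]]].
  by exists lab; split; rewrite // addSn ltnW.
have [lab [w_lab le_m]] := IH w w_near.
have [i [j wz_agree]] := csr_adj_agree_off2 wz.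
exists (merge_labels lab i j); split; first exact: zero_sum_labelling_merge wz_agree w_lab.
by apply: leq_trans le_m _; rewrite addSnnS leq_add2l card_merge_labels.
Qed.

Lemma natr_ord_eq0 k : ((k%:R : 'I_n) == 0) = (n %| k)%N.
Proof. by rewrite /dvdn -(val_Zp_nat (isT : (1 < n)%N)). Qed.

Section FarVertex.
Variable i0 : 'I_m.

Definition ones_fun : {ffun 'I_m -> 'I_n} :=
  [ffun t => if t == i0 then - (m.-1)%:R else 1].

Lemma sum_ones_fun : \sum_i ones_fun i = 0.
Proof.
rewrite (bigD1 i0) //= ffunE eqxx (eq_bigr (fun _ => 1)) => [|t ti0]; last first.
  by rewrite ffunE (negPf ti0).
by rewrite sumr_const cardC1 card_ord addNr.
Qed.

Definition csr_ones : V := csr_mk sum_ones_fun.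

Lemma ones_labelling_card lab : zero_sum_labelling ones_fun lab ->
  (#|lab @: [set: 'I_m]| <= (m.-1 %/ n).+1)%N.
Proof.
move=> ones_lab; set L := lab i0; set A := [set t | lab t != L].
have big_fibres t : t \in A -> (n <= #|[set u in A | lab u == lab t]|)%N.
  rewrite inE => tL.
  have fibreE : [set u in A | lab u == lab t] = [set u | lab u == lab t].
    by apply/setP => u; rewrite !inE andb_idl // => /eqP ->.
  have ones_on_fibre u : lab u == lab t -> ones_fun u = 1.
    by move=> /eqP ltu; rewrite ffunE; case: eqP => // ui0; rewrite -ltu ui0 eqxx in tL.
  have := ones_lab (lab t); rewrite (eq_bigr _ ones_on_fibre) sumr_const fibreE cardsE.
  move=> /eqP; rewrite natr_ord_eq0 => /dvdn_leq; apply.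
  by apply/card_gt0P; exists t; apply/eqnP.
have cardA : (#|A| <= m.-1)%N.
  apply: (@leq_trans #|[set~ i0]|); last by rewrite cardsC1 card_ord.
  by apply/subset_leq_card/subsetP => t; rewrite !inE; apply: contraNneq => ->.
have cover_im : (#|lab @: [set: 'I_m]| <= (#|lab @: A|).+1)%N.
  rewrite -add1n -(cards1 L); apply: leq_trans (leq_card_setU _ _).
  apply/subset_leq_card/subsetP => _ /imsetP[t _ ->]; rewrite !inE.
  by case: eqVneq => //= tL; apply/imsetP; exists t; rewrite ?inE.
apply: leq_trans cover_im _; rewrite ltnS leq_divRL //.
exact: leq_trans (card_imset_mul big_fibres) cardA.
Qed.

Lemma csr_ones_far k : csr_ones \in ball (csr_adj m n) k csr0 ->
  (m.-1 - m.-1 %/ n <= k)%N.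
Proof.
move=> /ball_csr0_labelling[lab [ones_lab le_m]].
have := ones_labelling_card ones_lab; move: (m.-1 %/ n)%N => q; lia.
Qed.

End FarVertex.

Definition csr_supp (x y : V) : {set 'I_m} := [set i | sval x i != sval y i].

Definition diff_sum (x y : V) (U : {set 'I_m}) : 'I_n :=
  \sum_(i in U) (sval y i - sval x i).

Definition minimal_zero_sum (x y : V) :=
  forall U : {set 'I_m}, U \proper csr_supp x y -> U != set0 -> diff_sum x y U != 0.

Lemma diff_sum_supp x y : diff_sum x y (csr_supp x y) = 0.
Proof.
have : \sum_i (sval y i - sval x i) = 0 by rewrite sumrB !csr_sum_eq0 subrr.
rewrite (bigID (mem (csr_supp x y))) /= [X in _ + X]big1 ?addr0 //.
by move=> i; rewrite inE negbK => /eqP ->; rewrite subrr.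
Qed.

Lemma csr_supp_eq0 x y : csr_supp x y = set0 -> x = y.
Proof.
move=> supp0; apply/val_inj/ffunP => i; apply/eqP.
by have := in_set0 i; rewrite -supp0 inE => /negbFE.
Qed.

Section Transfer.
Variables (x y : V) (i j : 'I_m).
Hypotheses (neq_ij : i != j) (i_supp : i \in csr_supp x y).
Let a := sval y i - sval x i.

Definition transfer_fun : {ffun 'I_m -> 'I_n} :=
  [ffun k => sval x k + a *+ (k == i) - a *+ (k == j)].

Lemma sum_transfer : \sum_k transfer_fun k = 0.
Proof.
under eq_bigr do rewrite ffunE.
by rewrite sumrB big_split /= !sum_natmul_eq csr_sum_eq0 add0r subrr.
Qed.

Definition csr_transfer : V := csr_mk sum_transfer.
Local Notation x' := csr_transfer.

Lemma csr_adj_transfer : csr_adj m n x x'.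
Proof.
have a_neq0 : a != 0 by rewrite subr_eq0 eq_sym; have := i_supp; rewrite inE.
rewrite /csr_adj (_ : [set k | _] = [set i; j]) ?cards2 ?neq_ij //; apply/setP => k.
rewrite !inE ffunE /=; case: (eqVneq k i) => [->|ki].
  by rewrite (negPf neq_ij) subr0 mulr1n eq_sym -subr_eq0 addrAC subrr add0r.
case: (eqVneq k j) => [->|kj]; last by rewrite subr0 addr0 eqxx.
by rewrite addr0 mulr1n eq_sym -subr_eq0 addrAC subrr sub0r oppr_eq0.
Qed.

Lemma diff_sum_transfer U :
  diff_sum x' y U = diff_sum x y U - a *+ (i \in U) + a *+ (j \in U).
Proof.
have diffE k :
    sval y k - sval x' k = sval y k - sval x k - a *+ (k == i) + a *+ (k == j).
  by rewrite csr_mkE ffunE; ring.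
by rewrite /diff_sum (eq_bigr _ (fun k _ => diffE k)) big_split sumrB /= !sum_natmul_eq.
Qed.

Lemma csr_supp_transfer : j \in csr_supp x y -> diff_sum x y [set i; j] != 0 ->
  csr_supp x' y = csr_supp x y :\ i.
Proof.
move=> j_supp pair_sum; apply/setP => k; rewrite !inE csr_mkE ffunE.
case: (eqVneq k i) => [->|ki] /=.
  by rewrite mulr1n (negPf neq_ij) subr0 subrKC eqxx.
case: (eqVneq k j) => [->|kj]; last by rewrite subr0 addr0.
have := j_supp; rewrite inE => -> /=; apply: contra pair_sum => /eqP xj'.
by rewrite /diff_sum big_setU1 ?inE //= big_set1 -xj' /a; apply/eqP; ring.
Qed.

End Transfer.

Lemma minimal_zero_sum_reach s x y : #|csr_supp x y| = s.+2 ->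
  minimal_zero_sum x y -> y \in ball (csr_adj m n) s.+1 x.
Proof.
elim: s x y => [|s IH] x y card_supp xy_min.
  by apply: (ball_edge (y := x)); rewrite ?in_ball0 // /csr_adj -/(csr_supp x y) card_supp.
have [i i_supp] : exists i, i \in csr_supp x y by apply/card_gt0P; rewrite card_supp.
have card_supp_i : #|csr_supp x y :\ i| = s.+2.
  by have := cardsD1 i (csr_supp x y); rewrite i_supp card_supp => -[].
have [j /setD1P[ji j_supp]] : exists j, j \in csr_supp x y :\ i.
  by apply/card_gt0P; rewrite card_supp_i.
have neq_ij : i != j by rewrite eq_sym.
have sub_supp (U : {set 'I_m}) : U \subset csr_supp x y :\ i -> U \subset csr_supp x y.
  by move=> sub_U; apply/subsetP => k /(subsetP sub_U) /setD1P[].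
have pair_sum : diff_sum x y [set i; j] != 0.
  apply: xy_min; last by apply/set0Pn; exists i; rewrite !inE eqxx.
  rewrite properEcard cards2 neq_ij card_supp andbT.
  by apply/subsetP => k /set2P[] ->.
set x' := csr_transfer x y i j.
have supp' := csr_supp_transfer neq_ij j_supp pair_sum.
have x'y_min : minimal_zero_sum x' y.
  move=> U; rewrite supp' => U_proper U_neq0.
  have iU : i \notin U by apply/negP => /(subsetP (proper_sub U_proper)) /setD1P[/eqP].
  rewrite diff_sum_transfer (negPf iU) subr0.
  have [jU|jU] /= := boolP (j \in U); last first.
    rewrite addr0; apply: xy_min U_neq0.
    exact: proper_trans U_proper (properD1 i_supp).
  rewrite mulr1n addrC -(big_setU1 _ iU) /=; apply: xy_min.
    rewrite properEcard cardsU1 iU card_supp add1n ltnS -card_supp_i.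
    by rewrite (proper_card U_proper) subUset sub1set i_supp sub_supp // proper_sub.
  by apply/set0Pn; exists i; rewrite !inE eqxx.
have x'_near : x' \in ball (csr_adj m n) 1 x.
  by apply: ball_edge (csr_adj_transfer neq_ij i_supp); rewrite in_ball0.
by apply: ball_trans x'_near (IH x' y _ x'y_min); rewrite supp'.
Qed.

Lemma exists_minimal_zero_sum x y : x != y ->
  exists B : {set 'I_m}, [/\ B \subset csr_supp x y, diff_sum x y B = 0,
    (2 <= #|B| <= n)%N &
    forall U : {set 'I_m}, U \proper B -> U != set0 -> diff_sum x y U != 0].
Proof.
move=> neq_xy; have supp_neq0 : csr_supp x y != set0.
  by apply: contraNneq neq_xy => /csr_supp_eq0 ->.
pose P (U : {set 'I_m}) := [&& U \subset csr_supp x y, U != set0 & diff_sum x y U == 0].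
have P_supp : P (csr_supp x y) by rewrite /P subxx supp_neq0 diff_sum_supp eqxx.
have [B /and3P[B_sub B_neq0 /eqP B_sum] B_min] :=
  arg_minnP (fun U : {set 'I_m} => #|U|) P_supp.
have U_min (U : {set 'I_m}) :
    U \subset B -> U != set0 -> diff_sum x y U = 0 -> (#|B| <= #|U|)%N.
  move=> U_sub U_neq0 U_sum; apply: B_min.
  by rewrite /P (subset_trans U_sub B_sub) U_neq0 U_sum /=.
exists B; split => //; last first.
  move=> U U_proper U_neq0; apply/eqP => /(U_min U (proper_sub U_proper) U_neq0).
  by rewrite leqNgt proper_card.
apply/andP; split.
  rewrite ltnNge; apply/negP => B_le1.
  have /cards1P[k B_k] : #|B| == 1%N by rewrite eqn_leq B_le1 card_gt0.
  move: B_sum; rewrite /diff_sum B_k big_set1 => /eqP; rewrite subr_eq0 => /eqP yx.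
  by have := subsetP B_sub k; rewrite B_k set11 inE yx eqxx => /(_ isT).
rewrite leqNgt; apply/negP => lt_nB.
have [|U [U_sub U_neq0 U_sum le_Un]] :=
  zero_sum_subset (fun k => sval y k - sval x k) (B := B).
  by rewrite card_ord ltnW.
have := leq_trans (U_min U U_sub U_neq0 U_sum) le_Un.
by rewrite card_ord leqNgt lt_nB.
Qed.

Section Patch.
Variables (x y : V) (B : {set 'I_m}).
Hypothesis B_sum : diff_sum x y B = 0.

Definition patch_fun : {ffun 'I_m -> 'I_n} :=
  [ffun k => if k \in B then sval y k else sval x k].

Lemma sum_patch : \sum_k patch_fun k = 0.
Proof.
have patchE k : patch_fun k = sval x k + (if k \in B then sval y k - sval x k else 0).
  by rewrite ffunE; case: ifP; rewrite ?addr0 // subrKC.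
by rewrite (eq_bigr _ (fun k _ => patchE k)) big_split -big_mkcond /= csr_sum_eq0 add0r.
Qed.

Definition csr_patch : V := csr_mk sum_patch.
Local Notation z := csr_patch.

Lemma csr_supp_patchl : B \subset csr_supp x y -> csr_supp x z = B.
Proof.
move=> B_sub; apply/setP => k; rewrite !inE ffunE.
by case: ifP => [/(subsetP B_sub)|]; rewrite ?inE ?eqxx.
Qed.

Lemma csr_supp_patchr : csr_supp z y = csr_supp x y :\: B.
Proof. by apply/setP => k; rewrite !inE ffunE; case: (k \in B); rewrite ?eqxx. Qed.

Lemma diff_sum_patchl (U : {set 'I_m}) :
  U \subset B -> diff_sum x z U = diff_sum x y U.
Proof. by move=> U_sub; apply: eq_bigr => k /(subsetP U_sub) kB; rewrite ffunE kB. Qed.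

End Patch.

Lemma csr_ball_supp s x y : (#|csr_supp x y| <= s)%N ->
  y \in ball (csr_adj m n) (csr_bound n #|csr_supp x y|) x.
Proof.
elim: s x y => [|s IH] x y le_supp; have [<-|neq_xy] := eqVneq x y; rewrite ?mem_ball //.
  move: le_supp; rewrite leqn0 cards_eq0 => /eqP/csr_supp_eq0 eq_xy.
  by rewrite eq_xy eqxx in neq_xy.
have [B [B_sub B_sum /andP[B_ge2 B_le_n] B_min]] := exists_minimal_zero_sum neq_xy.
set z := csr_patch B_sum.
have supp_xz : csr_supp x z = B := csr_supp_patchl B_sum B_sub.
have z_near : z \in ball (csr_adj m n) #|B|.-1 x.
  have -> : #|B|.-1 = (#|B| - 2).+1 by lia.
  apply: minimal_zero_sum_reach; first by rewrite supp_xz; lia.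
  move=> U; rewrite supp_xz => U_proper U_neq0.
  by rewrite diff_sum_patchl ?proper_sub // B_min.
have card_zy : #|csr_supp z y| = (#|csr_supp x y| - #|B|)%N.
  by rewrite csr_supp_patchr cardsD (setIidPr B_sub).
have y_near : y \in ball (csr_adj m n) (csr_bound n (#|csr_supp x y| - #|B|)) z.
  by rewrite -card_zy; apply: IH; rewrite card_zy; lia.
apply: (subsetP (subset_ball _ _ _)) (ball_trans z_near y_near).
by apply: csr_bound_split; rewrite ?B_ge2 ?subset_leq_card.
Qed.

Lemma csr_ball_bound x y : y \in ball (csr_adj m n) (csr_bound n m) x.
Proof.
apply: (subsetP (subset_ball _ _ (csr_bound_mono _ _))) (csr_ball_supp (leqnn _)) => //.
by rewrite -[m in (_ <= m)%N]card_ord max_card.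
Qed.

End CyclicSimplicialRook.

Theorem theorem5 (m n : nat) (hm : 0 < m) (hn : 0 < n) :
  diameter (csr_adj m n) = m - (m - 1) %/ n - 1.
Proof.
case: n hn => [//|[|p]] _.
  rewrite divn1 (_ : m - (m - 1) - 1 = 0); last by lia.
  apply/eqP; rewrite -leqn0; apply/bigmax_leqP => x _; apply/bigmax_leqP => y _.
  rewrite (_ : y = x) ?gdist_le ?mem_ball //.
  by apply/val_inj/ffunP => i; rewrite (ord1 (sval y i)) (ord1 (sval x i)).
apply/eqP; rewrite eqn_leq; apply/andP; split.
  apply/bigmax_leqP => x _; apply/bigmax_leqP => y _.
  exact: gdist_le (csr_ball_bound x y).
apply: leq_trans (leq_bigmax (csr0 m p)).
apply: leq_trans (leq_bigmax (F := fun y => gdist _ _ y) (@csr_ones m p (Ordinal hm))).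
apply: gdist_ge (csr_ball_bound _ _) _ => k /csr_ones_far.
by rewrite /csr_bound !subn1; move: (m.-1 %/ p.+2) => q; lia.
Qed.
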